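(* Let $i=1$ if $\Phi$ is of type $\mathsf{E}_6$ and $i=7$ if $\Phi$ is of type $\mathsf{E}_7$, and let $W_i$ be the subgroup of the Weyl group $W$ generated by $S\setminus\{s_i\}$. Then for every $\alpha\in\Phi$, the reflection $s_\alpha$ lies in $W_i\cup W_is_iW_i$.
   Context: Bourbaki labelling of simple roots $\alpha_1,\dots,\alpha_n$, $s_j$ the simple reflection in $\alpha_j$, $S=\{s_1,\dots,s_n\}$, and $s_\alpha$ the reflection in the root $\alpha$. *)

(* Concrete model of the root systems E6, E7 in the basis of
   simple roots (Bourbaki labelling), with the Weyl group acting on the root
   lattice Z^n (column vectors of coefficients w.r.t. alpha_1..alpha_n). *)
From HB Require Import structures.
From mathcomp Require Import all_boot all_order all_algebra.
Set Implicit Arguments. Unset Strict Implicit. Unset Printing Implicit Defensive.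
Import GRing.Theory Num.Theory.
Local Open Scope ring_scope.

Inductive Etype := E6 | E7.

Definition rank (t : Etype) : nat := match t with E6 => 6 | E7 => 7 end.

(* Edges of the Dynkin diagram, Bourbaki labelling, shifted to 0-based indices:
   E6 : 1-3, 3-4, 4-5, 5-6, 2-4 ;  E7 : additionally 6-7. *)
Definition dynkin_edges (t : Etype) : seq (nat * nat) :=
  let e6 := [:: (0, 2); (2, 3); (3, 4); (4, 5); (1, 3)]%N in
  match t with E6 => e6 | E7 => rcons e6 (5, 6)%N end.

Definition adjacent (t : Etype) (a b : nat) : bool :=
  ((a, b) \in dynkin_edges t) || ((b, a) \in dynkin_edges t).

Definition cartan (t : Etype) : 'M[int]_(rank t) :=
  \matrix_(a, b) (if a == b then 2%:Z else if adjacent t a b then -1 else 0).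

Definition simple_root (t : Etype) (j : 'I_(rank t)) : 'cV[int]_(rank t) :=
  delta_mx j 0.

(* Reflection in a root alpha (all roots have (alpha,alpha) = 2 in the simply
   laced case, so alpha^vee pairing is the form itself):
   s_alpha(v) = v - (alpha, v) alpha, where (u, v) = u^T C v. *)
Definition refl (t : Etype) (a : 'cV[int]_(rank t)) : 'M[int]_(rank t) :=
  1%:M - a *m (a^T *m cartan t).

Definition sref (t : Etype) (j : 'I_(rank t)) : 'M[int]_(rank t) :=
  refl (simple_root j).

(* Subgroup of GL generated by the simple reflections s_j with P j.
   Since the generators are involutions, it is the set of finite products. *)
Inductive gen_by (t : Etype) (P : 'I_(rank t) -> bool) : 'M[int]_(rank t) -> Prop :=
  | gen_one : gen_by P 1%:M
  | gen_mul j g : P j -> gen_by P g -> gen_by P (sref j *m g).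

Definition weyl (t : Etype) (w : 'M[int]_(rank t)) : Prop := gen_by (fun _ => true) w.

Definition is_root (t : Etype) (a : 'cV[int]_(rank t)) : Prop :=
  exists w j, weyl w /\ a = w *m simple_root j.

(* the distinguished index: i = 1 for E6, i = 7 for E7 (0-based: 0 and 6) *)
Definition special_index (t : Etype) : 'I_(rank t) :=
  match t return 'I_(rank t) with
  | E6 => @Ordinal 6 0 isT
  | E7 => @Ordinal 7 6 isT
  end.

Definition Wi (t : Etype) (w : 'M[int]_(rank t)) : Prop :=
  gen_by (fun j => j != special_index t) w.

From mathcomp Require Import all_boot all_order all_algebra.
Import GRing.Theory.
Local Open Scope ring_scope.
Set Implicit Arguments. Unset Strict Implicit. Unset Printing Implicit Defensive.

(* If a = u (± alpha_j) then s_a = u s_j u^-1, so it suffices to show that every root is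
   W_i-conjugate to plus or minus a simple root: then s_a lies in W_i when j <> i and in
   W_i s_i W_i when j = i.  Working with coefficient vectors in the basis of simple roots, we
   compute the union of the W_i-orbits of the +-alpha_j; since it contains the simple roots
   and is stable under every simple reflection, it contains Phi = W {alpha_1, ..., alpha_n}.
   The signs are needed: W_i does not change the alpha_i-coordinate. *)

Section Closure.

Variables (T K : eqType) (f : K -> T -> T) (ks : seq K).

Definition closure_step (L : seq T) : seq T := undup (L ++ [seq f k x | k <- ks, x <- L]).

Definition closure (m : nat) (L : seq T) : seq T := iter m closure_step L.

Lemma closure_subset m L : {subset L <= closure m L}.
Proof.
elim: m => [|m IH] //= x /IH xL.
by rewrite mem_undup mem_cat xL.
Qed.

Lemma closure_ind (P : T -> Prop) m L :
  (forall x, x \in L -> P x) -> (forall k x, k \in ks -> P x -> P (f k x)) ->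
  forall x, x \in closure m L -> P x.
Proof.
move=> PL Pf; elim: m => [|m IH] //= x.
rewrite mem_undup mem_cat => /orP [/IH //|/allpairsP [[k y] /= [kks yL ->]]].
exact/Pf/IH.
Qed.

End Closure.

Section Reflections.

Variables (n : nat) (C : 'M[int]_n).

Definition reflection (a : 'cV[int]_n) : 'M[int]_n := 1%:M - a *m (a^T *m C).

Lemma reflectionN a : reflection (- a) = reflection a.
Proof. by rewrite /reflection linearN /= !mulNmx mulmxN opprK. Qed.

Lemma reflection_conj (g g' : 'M[int]_n) a :
  g^T *m C *m g = C -> g *m g' = 1%:M ->
  reflection (g *m a) = g *m reflection a *m g'.
Proof.
move=> isog gg'.
have gTC : g^T *m C = C *m g' by rewrite -[g^T *m C]mulmx1 -gg' mulmxA isog.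
rewrite /reflection trmx_mul -(mulmxA a^T) gTC mulmxBr mulmx1 mulmxBl gg'.
by rewrite !mulmxA.
Qed.

Variable a : 'cV[int]_n.
Hypothesis a_norm : a^T *m C *m a = 2%:M.

Lemma reflection_involutive : reflection a *m reflection a = 1%:M.
Proof.
rewrite /reflection; set P := a *m (a^T *m C).
have PP : P *m P = P + P.
  rewrite /P -mulmxA (mulmxA (a^T *m C)) a_norm mul_scalar_mx -scalemxAr.
  by rewrite -[2]/(1 + 1) scalerDl scale1r.
by rewrite mulmxBl mul1mx mulmxBr mulmx1 PP opprB addrK subrK.
Qed.

Hypothesis C_sym : C^T = C.

Lemma reflection_isometry : (reflection a)^T *m C *m reflection a = C.
Proof.
have trC : (reflection a)^T *m C = C *m reflection a.
  rewrite /reflection linearB /= trmx1 mulmxBl mul1mx mulmxBr mulmx1.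
  by rewrite !trmx_mul trmxK C_sym -!mulmxA.
by rewrite trC -mulmxA reflection_involutive mulmx1.
Qed.

End Reflections.

Lemma refl_reflection (t : Etype) : @refl t = reflection (cartan t).
Proof. by []. Qed.

Lemma cartan_sym (t : Etype) : (cartan t)^T = cartan t.
Proof.
apply/matrixP=> a b; rewrite !mxE eq_sym /adjacent.
by congr (if _ then _ else _); rewrite orbC.
Qed.

Lemma simple_root_norm (t : Etype) (j : 'I_(rank t)) :
  (simple_root j)^T *m cartan t *m simple_root j = 2%:M.
Proof.
rewrite /simple_root trmx_delta -rowE -colE.
by apply/matrixP=> a b; rewrite (ord1 a) (ord1 b) !mxE eqxx.
Qed.

Lemma sref_isometry (t : Etype) (j : 'I_(rank t)) :
  (sref j)^T *m cartan t *m sref j = cartan t.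
Proof. exact/reflection_isometry/cartan_sym/simple_root_norm. Qed.

Lemma sref_involutive (t : Etype) (j : 'I_(rank t)) : sref j *m sref j = 1%:M.
Proof. exact/reflection_involutive/simple_root_norm. Qed.

Section GeneratedSubgroups.

Variables (t : Etype) (P : 'I_(rank t) -> bool).

Lemma gen_by_sref j : P j -> gen_by P (sref j).
Proof. by move=> Pj; rewrite -[sref j]mulmx1; apply: gen_mul => //; apply: gen_one. Qed.

Lemma gen_by_mul g h : gen_by P g -> gen_by P h -> gen_by P (g *m h).
Proof.
elim=> [|j g' Pj _ IH] Ph; first by rewrite mul1mx.
by rewrite -mulmxA; apply: gen_mul => //; apply: IH.
Qed.

Lemma gen_by_isometry g : gen_by P g -> g^T *m cartan t *m g = cartan t.
Proof.
elim=> [|j h _ _ IH]; first by rewrite trmx1 mul1mx mulmx1.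
rewrite trmx_mul -mulmxA (mulmxA _ (sref j)) mulmxA -(mulmxA h^T).
by rewrite (mulmxA (sref j)^T) sref_isometry.
Qed.

Lemma gen_by_inv g : gen_by P g -> exists2 g', gen_by P g' & g *m g' = 1%:M.
Proof.
elim=> [|j h Pj _ [h' Ph' hh']]; first by exists 1%:M; [apply: gen_one | rewrite mulmx1].
exists (h' *m sref j); first exact/gen_by_mul/gen_by_sref.
by rewrite mulmxA -(mulmxA _ h) hh' mulmx1 sref_involutive.
Qed.

End GeneratedSubgroups.

Lemma refl_gen_by_conj (t : Etype) (P : 'I_(rank t) -> bool) u j a :
  gen_by P u -> a = u *m simple_root j \/ a = - (u *m simple_root j) ->
  exists2 u', gen_by P u' & refl a = u *m sref j *m u'.
Proof.
move=> Pu a_eq; have [u' Pu' uu'] := gen_by_inv Pu; exists u' => //.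
by case: a_eq => ->; rewrite refl_reflection ?reflectionN
  (reflection_conj _ (gen_by_isometry Pu) uu').
Qed.

Lemma simple_root_coef (t : Etype) (j i : 'I_(rank t)) :
  simple_root j i 0 = (i == j :> nat)%:R.
Proof. by rewrite mxE andbT. Qed.

Definition col_of_seq n (s : seq int) : 'cV[int]_n := \col_i nth 0 s i.

Definition cartan_coef (t : Etype) (a b : nat) : int :=
  if a == b then 2%:Z else if adjacent t a b then -1 else 0.

Definition cartan_dot (t : Etype) (k : nat) (s : seq int) : int :=
  foldr +%R 0 [seq cartan_coef t k b * nth 0 s b | b <- iota 0 (rank t)].

Definition sref_seq (t : Etype) (k : nat) (s : seq int) : seq int :=
  set_nth 0 s k (nth 0 s k - cartan_dot t k s).

Lemma sref_seqE (t : Etype) (k : 'I_(rank t)) s :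
  sref k *m col_of_seq (rank t) s = col_of_seq (rank t) (sref_seq t k s).
Proof.
have dotE : (simple_root k)^T *m cartan t *m col_of_seq (rank t) s
    = (cartan_dot t k s)%:M.
  apply/matrixP=> i j; rewrite (ord1 i) (ord1 j) /simple_root trmx_delta -rowE.
  rewrite !mxE eqxx mulr1n /cartan_dot foldrE -val_enum_ord !big_map.
  by apply: eq_bigr => b _; rewrite !mxE.
apply/matrixP=> i j; rewrite (ord1 j).
rewrite /sref refl_reflection /reflection mulmxBl mul1mx -mulmxA dotE mul_mx_scalar.
rewrite [LHS]mxE [X in X + _]mxE [X in _ + X]mxE [X in - X]mxE simple_root_coef.
rewrite mxE nth_set_nth /=.
by case: eqP => [->|_]; rewrite ?mulr1 ?mulr0 ?subr0.
Qed.

Definition unit_seq (n : nat) (c : int) (j : nat) : seq int :=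
  mkseq (fun i => if i == j then c else 0) n.

Lemma col_of_unit_seq (t : Etype) c (j : 'I_(rank t)) :
  col_of_seq (rank t) (unit_seq (rank t) c j) = c *: simple_root j.
Proof.
apply/matrixP=> i z; rewrite (ord1 z) [LHS]mxE [RHS]mxE simple_root_coef nth_mkseq //.
by case: (_ == _); rewrite ?mulr1 ?mulr0.
Qed.

Definition simple_seqs (t : Etype) (c : int) : seq (seq int) :=
  [seq unit_seq (rank t) c j | j <- iota 0 (rank t)].

Definition Wi_gens (t : Etype) : seq nat :=
  [seq k <- iota 0 (rank t) | k != val (special_index t)].

(* The number of rounds only has to be large enough for [Wi_orbits_sref_closed]
   to compute to [true]. *)
Definition Wi_orbits (t : Etype) : seq (seq int) :=
  closure (sref_seq t) (Wi_gens t) 16 (simple_seqs t 1 ++ simple_seqs t (-1)).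

Definition sref_closed (t : Etype) (L : seq (seq int)) : bool :=
  all (fun s => all (fun k => sref_seq t k s \in L) (iota 0 (rank t))) L.

Lemma weyl_sref_closed (t : Etype) L w (j : 'I_(rank t)) :
  sref_closed t L -> unit_seq (rank t) 1 j \in L -> weyl w ->
  exists2 s, s \in L & w *m simple_root j = col_of_seq (rank t) s.
Proof.
move=> /allP closedL jL; elim=> [|k g _ _ [s sL gj]].
  by exists (unit_seq (rank t) 1 j); rewrite // mul1mx col_of_unit_seq scale1r.
exists (sref_seq t k s); last by rewrite -mulmxA gj sref_seqE.
by apply: (allP (closedL s sL)); rewrite mem_iota /=.
Qed.

Definition Wi_conj_simple (t : Etype) (a : 'cV[int]_(rank t)) : Prop :=
  exists u j, Wi u /\ (a = u *m simple_root j \/ a = - (u *m simple_root j)).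

Lemma Wi_orbits_conj (t : Etype) s :
  s \in Wi_orbits t -> Wi_conj_simple (col_of_seq (rank t) s).
Proof.
apply: (closure_ind (P := fun s => Wi_conj_simple (col_of_seq (rank t) s))) => [x | k x].
  rewrite mem_cat => /orP [] /mapP [j]; rewrite mem_iota /= => jn ->;
    exists 1%:M, (Ordinal jn); (split; first exact: gen_one);
    rewrite mul1mx (col_of_unit_seq _ (Ordinal jn)) ?scale1r ?scaleN1r.
  - by left.
  - by right.
rewrite mem_filter mem_iota /= => /andP [ki kn] [u [j [Wi_u x_eq]]].
have Wi_k : Wi (sref (Ordinal kn)) by apply: gen_by_sref; apply: contra ki => /eqP <-.
exists (sref (Ordinal kn) *m u), j; split; first exact: gen_by_mul.
rewrite -[sref_seq t k x]/(sref_seq t (Ordinal kn) x) -sref_seqE -!mulmxA.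
by case: x_eq => ->; [left | right; rewrite mulmxN].
Qed.

Lemma Wi_orbits_sref_closed (t : Etype) : sref_closed t (Wi_orbits t).
Proof. by case: t; vm_compute. Qed.

Lemma root_Wi_conj_simple (t : Etype) (a : 'cV[int]_(rank t)) :
  is_root a -> Wi_conj_simple a.
Proof.
case=> w [j [weyl_w ->]].
have jL : unit_seq (rank t) 1 j \in Wi_orbits t.
  by apply: closure_subset; rewrite mem_cat /simple_seqs map_f // mem_iota add0n ltn_ord.
have [s sL ->] := weyl_sref_closed (Wi_orbits_sref_closed t) jL weyl_w.
exact: Wi_orbits_conj.
Qed.

Theorem lemma2p4 (t : Etype) (a : 'cV[int]_(rank t)) :
  is_root a ->
  Wi (refl a) \/
  exists u v, Wi u /\ Wi v /\ refl a = u *m sref (special_index t) *m v.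
Proof.
move=> /root_Wi_conj_simple [u [j [Wi_u a_eq]]].
have [u' Wi_u' ->] := refl_gen_by_conj Wi_u a_eq.
have [->|j_ne] := eqVneq j (special_index t); first by right; exists u, u'.
by left; apply/gen_by_mul/Wi_u'/gen_by_mul/gen_by_sref.
Qed.
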